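(* Let $D_1,\dots,D_k$ be $n\times n$ doubly stochastic matrices and $\delta_1,\dots,\delta_k$ positive real numbers, and let $S_k(D)=\delta_1D_1+\cdots+\delta_kD_k$. Then for every $m\in\mathbb{N}$ and every block structure $\mathbb{B}\subseteq M_n(\mathbb{C})$, $\mu_{\mathbb{B}}(S_k(D)^m)=(\delta_1+\cdots+\delta_k)^m$.
   Context: A doubly stochastic matrix is a real matrix with nonnegative entries whose row sums and column sums all equal $1$. $\|M\|_2$ denotes the spectral norm. A block structure is a set of the form $\mathbb{B}=\{\operatorname{diag}(\delta_1I_{k_1},\dots,\delta_rI_{k_r},\Delta_1,\dots,\Delta_s)\mid \delta_i\in\mathbb{C},\ \Delta_j\in M_{n_j}(\mathbb{C})\}\subseteq M_n(\mathbb{C})$ for some $r,s\in\mathbb{N}_0$ and positive integers $k_i,n_j$ with $\sum k_i+\sum n_j=n$. The structured singular value is $\mu_{\mathbb{B}}(M)=0$ if $\det(I+M\Delta)\neq0$ for all $\Delta\in\mathbb{B}$, and otherwise $\mu_{\mathbb{B}}(M)=\big(\min\{\|\Delta\|_2\mid \Delta\in\mathbb{B},\ \det(I+M\Delta)=0\}\big)^{-1}$. *)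

From HB Require Import structures.
From mathcomp Require Import all_boot all_order all_algebra.
From mathcomp Require Import boolp classical_sets reals.
From mathcomp Require Import complex.
Set Implicit Arguments. Unset Strict Implicit. Unset Printing Implicit Defensive.
Import Order.TTheory GRing.Theory Num.Theory.
Local Open Scope ring_scope.
Local Open Scope classical_set_scope.

Definition doubly_stochastic (R : realType) (n : nat) (D : 'M[R]_n) : Prop :=
  (forall i j, 0 <= D i j) /\
  (forall i, \sum_j D i j = 1) /\
  (forall j, \sum_i D i j = 1).

Definition cabs2 (R : realType) (z : R[i]) : R :=
  (complex.Re z) ^+ 2 + (complex.Im z) ^+ 2.

Definition vnorm2 (R : realType) (n : nat) (x : 'cV[R[i]]_n) : R :=
  Num.sqrt (\sum_i cabs2 (x i 0)).

Definition specnorm (R : realType) (n : nat) (A : 'M[R[i]]_n) : R :=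
  sup [set vnorm2 (A *m x) | x in [set x : 'cV[R[i]]_n | vnorm2 x <= 1]].

(* A block structure is given by the list ks = [k_1;...;k_r] of sizes of the
   scalar blocks delta_i I_{k_i} followed by the list ns = [n_1;...;n_s] of
   sizes of the full blocks Delta_j; blocks are placed on the diagonal in the
   order diag(delta_1 I_{k_1},...,delta_r I_{k_r},Delta_1,...,Delta_s). *)
Definition block_structure (n : nat) (ks ns : seq nat) : Prop :=
  all (fun k => 0 < k)%N ks /\ all (fun k => 0 < k)%N ns /\
  (sumn ks + sumn ns)%N = n.

(* end offset of block b (blocks numbered from 0) *)
Definition blk_end (ks ns : seq nat) (b : nat) : nat :=
  sumn (take b.+1 (ks ++ ns)).

Definition blk (ks ns : seq nat) (i : nat) : nat :=
  find (fun b => i < blk_end ks ns b)%N (iota 0 (size (ks ++ ns))).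

(* Membership of Delta in the block structure B(ks, ns), written out entrywise:
   entries outside diagonal blocks vanish; scalar blocks (numbers < size ks)
   are multiples of the identity; full blocks are arbitrary. *)
Definition in_block (R : realType) (n : nat) (ks ns : seq nat)
    (Delta : 'M[R[i]]_n) : Prop :=
  (forall i j : 'I_n, blk ks ns i <> blk ks ns j -> Delta i j = 0) /\
  (forall i j : 'I_n, blk ks ns i = blk ks ns j -> (blk ks ns i < size ks)%N ->
      (i <> j -> Delta i j = 0) /\ Delta i i = Delta j j).

Definition ssv (R : realType) (n : nat) (ks ns : seq nat) (M : 'M[R[i]]_n) : R :=
  let S := [set specnorm Delta | Delta in
             [set Delta | in_block ks ns Delta /\ \det (1%:M + M *m Delta) = 0]] in
  if `[< S !=set0 >] then (inf S)^-1 else 0.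

Definition Sk (R : realType) (n k : nat) (delta : 'I_k -> R) (D : 'I_k -> 'M[R]_n)
  : 'M[R]_n := \sum_(l < k) delta l *: D l.

Definition cmx (R : realType) (n : nat) (A : 'M[R]_n) : 'M[R[i]]_n :=
  map_mx (fun x => x%:C%C) A.

From HB Require Import structures.
From mathcomp Require Import all_boot all_order all_algebra.
From mathcomp Require Import boolp classical_sets reals.
From mathcomp Require Import complex.
From mathcomp Require Import ring.
Import Order.TTheory GRing.Theory Num.Theory Normc.
Set Implicit Arguments. Unset Strict Implicit. Unset Printing Implicit Defensive.
Local Open Scope ring_scope.

(* The matrix A = S_k(D)^m is nonnegative and all its row and column sums
   equal s = (delta_1 + ... + delta_k)^m.  By the Schur test (Cauchy-Schwarz
   weighted by the rows, then summing over the columns) ||A z|| <= s ||z||, so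
   every Delta with det(I + A Delta) = 0, i.e. with x = -A Delta x for some
   x <> 0, has ||Delta|| >= 1/s.  Conversely A 1 = s 1, so the scalar
   perturbation Delta = -(1/s) I, which lies in every block structure, makes
   I + A Delta singular and has norm 1/s. *)

Lemma weighted_cauchy_schwarz (R : realFieldType) (I : finType) (a t : I -> R) :
  (forall i, 0 <= a i) ->
  (\sum_i a i * t i) ^+ 2 <= (\sum_i a i) * \sum_i a i * t i ^+ 2.
Proof.
move=> a_ge0.
set A0 := \sum_i a i; set A1 := \sum_i a i * t i.
set A2 := \sum_i a i * t i ^+ 2.
have A0_ge0 : 0 <= A0 by exact: sumr_ge0.
have [A0_eq0|A0_neq0] := eqVneq A0 0.
  have a0 i : a i = 0 by exact: (psumr_eq0P (fun i _ => a_ge0 i) A0_eq0).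
  by rewrite /A1 big1 ?expr0n ?A0_eq0 ?mul0r // => i _; rewrite a0 mul0r.
have A0_gt0 : 0 < A0 by rewrite lt_def A0_neq0.
(* the weighted variance of [t] around its mean [A1 / A0] is nonnegative *)
have variance_ge0 : 0 <= \sum_i a i * (t i - A1 / A0) ^+ 2.
  by apply: sumr_ge0 => i _; rewrite mulr_ge0 ?sqr_ge0.
have variance_eq :
    \sum_i a i * (t i - A1 / A0) ^+ 2 = (A0 * A2 - A1 ^+ 2) / A0.
  rewrite (eq_bigr (fun i => a i * t i ^+ 2 - A1 / A0 * (a i * t i) *+ 2
                            + (A1 / A0) ^+ 2 * a i)); last by move=> i _; ring.
  rewrite !big_split /= sumrN sumrMnl -!mulr_sumr -/A0 -/A1 -/A2.
  by field.
by move: variance_ge0; rewrite variance_eq pmulr_lge0 ?invr_gt0 // subr_ge0.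
Qed.

Section VectorNorm.
Variable R : realType.
Implicit Types (a : R) (z : R[i]).

Lemma cabs2E z : cabs2 z = normc z ^+ 2.
Proof. by case: z => x y; rewrite sqr_sqrtr // addr_ge0 ?sqr_ge0. Qed.

Lemma normc_ge0 z : 0 <= normc z.
Proof. by case: z => x y; exact: sqrtr_ge0. Qed.

Lemma normc_real a : normc a%:C%C = `|a|.
Proof. by rewrite /= expr0n /= addr0 sqrtr_sqr. Qed.

Lemma normc_sum (I : finType) (f : I -> R[i]) :
  normc (\sum_i f i) <= \sum_i normc (f i).
Proof. exact: (@ler_norm_sum _ (Rcomplex R)). Qed.

Variable n : nat.
Implicit Types (x : 'cV[R[i]]_n) (A : 'M[R[i]]_n).

Lemma vnorm2E x : vnorm2 x = Num.sqrt (\sum_i normc (x i 0) ^+ 2).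
Proof. by congr Num.sqrt; apply: eq_bigr => i _; rewrite cabs2E. Qed.

Lemma vnorm2_ge0 x : 0 <= vnorm2 x.
Proof. exact: sqrtr_ge0. Qed.

Lemma vnorm2_eq0 x : vnorm2 x = 0 -> x = 0.
Proof.
move/eqP; rewrite vnorm2E sqrtr_eq0 => sum_le0.
have terms_ge0 i : 0 <= normc (x i 0) ^+ 2 by exact: sqr_ge0.
have sum_eq0 : \sum_i normc (x i 0) ^+ 2 = 0.
  by apply/le_anti; rewrite sum_le0 sumr_ge0.
apply/matrixP => i j; rewrite (ord1 j) mxE; apply: eq0_normc.
by apply/eqP; rewrite -sqrf_eq0 (psumr_eq0P (fun i _ => terms_ge0 i) sum_eq0).
Qed.

Lemma vnorm2Z c x : vnorm2 (c *: x) = normc c * vnorm2 x.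
Proof.
rewrite !vnorm2E (eq_bigr (fun i => normc c ^+ 2 * normc (x i 0) ^+ 2)).
  by rewrite -mulr_sumr sqrtrM ?sqr_ge0 // sqrtr_sqr ger0_norm ?normc_ge0.
by move=> i _; rewrite mxE normcM exprMn.
Qed.

Lemma vnorm2_0 : vnorm2 (0 : 'cV[R[i]]_n) = 0.
Proof. by rewrite -(scale0r 0) vnorm2Z normc0 mul0r. Qed.

Lemma vnorm2N x : vnorm2 (- x) = vnorm2 x.
Proof. by rewrite -scaleN1r vnorm2Z (normcN (1 : Rcomplex R)) normc1 mul1r. Qed.

Lemma normc_entry_le j x : normc (x j 0) <= vnorm2 x.
Proof.
rewrite vnorm2E -(ger0_norm (normc_ge0 _)) -sqrtr_sqr ler_sqrt.
  by rewrite (bigD1 j) //= lerDl sumr_ge0 // => i _; exact: sqr_ge0.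
by apply: sumr_ge0 => i _; exact: sqr_ge0.
Qed.

Lemma normc_mulmx_le A x i :
  normc ((A *m x) i 0) <= \sum_j normc (A i j) * normc (x j 0).
Proof.
rewrite mxE; apply: le_trans (normc_sum _) _.
by apply: ler_sum => j _; rewrite normcM.
Qed.

Lemma specnorm_has_sup A :
  has_sup [set vnorm2 (A *m x) | x in [set x : 'cV[R[i]]_n | vnorm2 x <= 1]].
Proof.
split; first by exists (vnorm2 (A *m 0)); exists 0; rewrite //= vnorm2_0.
exists (Num.sqrt (\sum_i (\sum_j normc (A i j)) ^+ 2)).
move=> _ [x /= x_le1 <-]; rewrite vnorm2E ler_sqrt; last first.
  by apply: sumr_ge0 => i _; exact: sqr_ge0.
apply: ler_sum => i _.
have row_ge0 : 0 <= \sum_j normc (A i j).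
  by apply: sumr_ge0 => j _; exact: normc_ge0.
rewrite lerXn2r ?nnegrE ?normc_ge0 //.
apply: le_trans (normc_mulmx_le _ _ _) _; apply: ler_sum => j _.
by rewrite ler_piMr ?normc_ge0 // (le_trans (normc_entry_le _ _)).
Qed.

Lemma vnorm2_mulmx_le A x : vnorm2 (A *m x) <= specnorm A * vnorm2 x.
Proof.
have [x0|x_neq0] := eqVneq (vnorm2 x) 0.
  by rewrite x0 (vnorm2_eq0 x0) mulmx0 mulr0 vnorm2_0.
have x_gt0 : 0 < vnorm2 x by rewrite lt_def x_neq0 vnorm2_ge0.
have unit_le1 : vnorm2 ((vnorm2 x)^-1%:C%C *: x) <= 1.
  by rewrite vnorm2Z normc_real ger0_norm ?invr_ge0 ?vnorm2_ge0 // mulVf.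
have := sup_upper_bound (specnorm_has_sup A)
  (ex_intro2 _ _ ((vnorm2 x)^-1%:C%C *: x) unit_le1 erefl).
rewrite -scalemxAr vnorm2Z normc_real ger0_norm ?invr_ge0 ?vnorm2_ge0 //.
by rewrite ler_pdivrMl // mulrC.
Qed.

Lemma specnorm_scalar_le c : specnorm (c%:M : 'M[R[i]]_n) <= normc c.
Proof.
apply: ge_sup; first exact: (specnorm_has_sup _).1.
move=> _ [x x_le1 <-]; rewrite mul_scalar_mx vnorm2Z.
by rewrite ler_piMr ?normc_ge0.
Qed.

End VectorNorm.

Definition semimagic (R : numDomainType) (n : nat) (s : R) (A : 'M[R]_n) :
    Prop :=
  (forall i j, 0 <= A i j) /\
  (forall i, \sum_j A i j = s) /\ (forall j, \sum_i A i j = s).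

Section Semimagic.
Variables (R : numDomainType) (n : nat).
Implicit Types (s t c : R) (A B : 'M[R]_n).

Lemma semimagic0 : semimagic 0 (0 : 'M[R]_n).
Proof.
by do ![split] => [i j|i|j]; rewrite ?mxE // big1 // => k _; rewrite mxE.
Qed.

Lemma semimagic1 : semimagic 1 (1%:M : 'M[R]_n).
Proof.
do ![split] => [i j|i|j]; first by rewrite mxE ler0n.
  rewrite (bigD1 i) //= big1 ?mxE ?eqxx ?addr0 // => j /negPf ij.
  by rewrite mxE eq_sym ij.
rewrite (bigD1 j) //= big1 ?mxE ?eqxx ?addr0 // => i /negPf ij.
by rewrite mxE ij.
Qed.

Lemma semimagicD s t A B :
  semimagic s A -> semimagic t B -> semimagic (s + t) (A + B).
Proof.
move=> [A_ge0 [rA cA]] [B_ge0 [rB cB]]; do ![split] => [i j|i|j].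
- by rewrite mxE addr_ge0.
- by rewrite -(rA i) -(rB i) -big_split; apply: eq_bigr => j _; rewrite mxE.
- by rewrite -(cA j) -(cB j) -big_split; apply: eq_bigr => i _; rewrite mxE.
Qed.

Lemma semimagicZ c s A : 0 <= c -> semimagic s A -> semimagic (c * s) (c *: A).
Proof.
move=> c_ge0 [A_ge0 [rA cA]]; do ![split] => [i j|i|j].
- by rewrite mxE mulr_ge0.
- by rewrite -(rA i) mulr_sumr; apply: eq_bigr => j _; rewrite mxE.
- by rewrite -(cA j) mulr_sumr; apply: eq_bigr => i _; rewrite mxE.
Qed.

Lemma semimagicM s t A B :
  semimagic s A -> semimagic t B -> semimagic (s * t) (A *m B).
Proof.
move=> [A_ge0 [rA cA]] [B_ge0 [rB cB]]; do ![split] => [i j|i|j].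
- by rewrite mxE sumr_ge0 // => k _; rewrite mulr_ge0.
- under eq_bigr do rewrite mxE.
  rewrite exchange_big -(rA i) mulr_suml; apply: eq_bigr => k _ /=.
  by rewrite -mulr_sumr rB.
- under eq_bigr do rewrite mxE.
  rewrite exchange_big -(cB j) mulr_sumr; apply: eq_bigr => k _ /=.
  by rewrite -mulr_suml cA mulrC.
Qed.

Lemma semimagicX s A m : semimagic s A -> semimagic (s ^+ m) (A ^+ m).
Proof.
move=> sA; elim: m => [|m IH]; first by rewrite !expr0; exact: semimagic1.
by rewrite !exprS -mulmxE; exact: semimagicM.
Qed.

End Semimagic.

Lemma semimagic_Sk (R : realType) (n k : nat) (delta : 'I_k -> R)
    (D : 'I_k -> 'M[R]_n) :
  (forall l, 0 <= delta l) -> (forall l, doubly_stochastic (D l)) ->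
  semimagic (\sum_l delta l) (Sk delta D).
Proof.
move=> delta_ge0 D_ds; rewrite /Sk -(eq_bigr _ (fun l _ => mulr1 (delta l))).
apply: (big_ind2 (@semimagic R n)) => [|s A t B|l _].
- exact: semimagic0.
- exact: semimagicD.
- exact: semimagicZ (D_ds l).
Qed.

Lemma det0_colP (F : fieldType) (n : nat) (A : 'M[F]_n) :
  reflect (exists2 v : 'cV_n, v != 0 & A *m v = 0) (\det A == 0).
Proof.
rewrite -det_tr; apply: (iffP det0P) => -[v v_neq0 Av0];
  exists v^T; rewrite ?trmx_eq0 //; apply: trmx_inj;
  by rewrite trmx_mul !trmxK Av0 trmx0.
Qed.

Section StructuredSingularValue.
Variables (R : realType) (n : nat).
Implicit Types (M Delta : 'M[R[i]]_n) (s : R).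

Lemma cmxE (A : 'M[R]_n) i j : cmx A i j = (A i j)%:C%C.
Proof. exact: mxE. Qed.

Lemma cmxX (A : 'M[R]_n) m : cmx (A ^+ m) = cmx A ^+ m.
Proof.
elim: m => [|m IH]; first by rewrite !expr0 /cmx map_mx1.
by rewrite !exprS -!mulmxE -IH; exact: map_mxM.
Qed.

Lemma vnorm2_semimagic_le s (A : 'M[R]_n) z :
  0 <= s -> semimagic s A -> vnorm2 (cmx A *m z) <= s * vnorm2 z.
Proof.
move=> s_ge0 [A_ge0 [rowA colA]].
rewrite !vnorm2E -(ger0_norm s_ge0) -sqrtr_sqr -sqrtrM ?sqr_ge0 //.
rewrite ler_sqrt; last first.
  by rewrite mulr_ge0 ?sqr_ge0 ?sumr_ge0 // => i _; exact: sqr_ge0.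
pose t j := normc (z j 0).
apply: (@le_trans _ _ (\sum_i s * \sum_j A i j * t j ^+ 2)).
  apply: ler_sum => i _; rewrite -(rowA i).
  apply: le_trans (@weighted_cauchy_schwarz _ _ (A i) t (A_ge0 i)).
  have wsum_ge0 : 0 <= \sum_j A i j * t j.
    by apply: sumr_ge0 => j _; rewrite mulr_ge0 ?normc_ge0.
  rewrite lerXn2r ?nnegrE ?normc_ge0 //.
  apply: le_trans (normc_mulmx_le _ _ _) _.
  by apply: ler_sum => j _; rewrite cmxE normc_real ger0_norm.
rewrite -mulr_sumr exchange_big /= expr2 -mulrA ler_wpM2l // mulr_sumr.
by apply: ler_sum => j _; rewrite -mulr_suml colA.
Qed.

Lemma semimagic_mul_ones s (A : 'M[R]_n) :
  semimagic s A -> cmx A *m (const_mx 1 : 'cV_n) = s%:C%C *: const_mx 1.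
Proof.
move=> [_ [rowA _]]; apply/matrixP => i j.
rewrite !mxE -(rowA i) rmorph_sum mulr1.
by apply: eq_bigr => k _; rewrite !mxE mulr1.
Qed.

Lemma in_block_scalar (ks ns : seq nat) (c : R[i]) :
  in_block ks ns (c%:M : 'M_n).
Proof.
split=> [i j blk_neq|i j _ _].
  by rewrite mxE; case: eqP => // ij; case: blk_neq; rewrite ij.
by split=> [/eqP/negPf ij|]; rewrite !mxE ?ij ?eqxx.
Qed.

Lemma specnorm_ge_singular s M Delta : 0 <= s ->
  (forall z, vnorm2 (M *m z) <= s * vnorm2 z) ->
  \det (1%:M + M *m Delta) = 0 -> 1 <= s * specnorm Delta.
Proof.
move=> s_ge0 M_le /eqP/det0_colP[x x_neq0].
rewrite mulmxDl mul1mx -mulmxA => /eqP; rewrite addr_eq0 => /eqP x_eq.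
have x_gt0 : 0 < vnorm2 x.
  rewrite lt_def vnorm2_ge0 andbT.
  by apply: contraNneq x_neq0 => /vnorm2_eq0 ->.
rewrite -(ler_pM2r x_gt0) mul1r -mulrA.
rewrite {1}x_eq vnorm2N; apply: le_trans (M_le _) _.
by rewrite ler_wpM2l // vnorm2_mulmx_le.
Qed.

Lemma det_eigen_perturbation M (lambda : R[i]) (v : 'cV_n) :
  v != 0 -> lambda != 0 -> M *m v = lambda *: v ->
  \det (1%:M + M *m (- lambda^-1)%:M) = 0.
Proof.
move=> v_neq0 lambda_neq0 Mv; apply/eqP/det0_colP; exists v => //.
rewrite mulmxDl mul1mx -mulmxA mul_scalar_mx -scalemxAr Mv scalerA.
by rewrite mulNr mulVf // scaleN1r subrr.
Qed.

Lemma ssv_eq_of_eigen_bound (ks ns : seq nat) M s :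
  (0 < n)%N -> 0 <= s -> (forall z, vnorm2 (M *m z) <= s * vnorm2 z) ->
  M *m (const_mx 1 : 'cV_n) = s%:C%C *: const_mx 1 -> ssv ks ns M = s.
Proof.
move=> n_gt0 s_ge0 M_le M1; rewrite /ssv.
set S := [set specnorm Delta | Delta in _]%classic.
have S_ge Delta : \det (1%:M + M *m Delta) = 0 -> 1 <= s * specnorm Delta.
  exact: specnorm_ge_singular.
have [s0|s_neq0] := eqVneq s 0.
  case: ifPn => [/asboolP[_ [Delta [_ det0] _]]|//].
  by have := S_ge _ det0; rewrite s0 mul0r ler10.
have s_gt0 : 0 < s by rewrite lt_def s_neq0.
pose Delta0 : 'M_n := (- s^-1)%:C%C%:M.
have S_Delta0 : S (specnorm Delta0).
  exists Delta0 => //; split; first exact: in_block_scalar.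
  rewrite /Delta0 rmorphN fmorphV.
  apply: det_eigen_perturbation M1; last by rewrite fmorph_eq0.
  apply/eqP => /matrixP /(_ (Ordinal n_gt0) 0).
  by rewrite !mxE; apply/eqP/oner_neq0.
rewrite ifT; last by apply/asboolP; exists (specnorm Delta0).
suff -> : inf S = s^-1 by rewrite invrK.
have S_lb : lbound S s^-1.
  move=> _ [Delta [_ det0] <-]; have := S_ge _ det0.
  by rewrite -ler_pdivrMl // mulr1.
apply/le_anti/andP; split.
  apply: le_trans (ge_inf _ S_Delta0) _; first by exists s^-1.
  apply: le_trans (specnorm_scalar_le _ _) _.
  by rewrite normc_real normrN ger0_norm ?invr_ge0.
by apply: lb_le_inf => //; exists (specnorm Delta0).
Qed.

End StructuredSingularValue.

Theorem corollary2p2 (R : realType) (n k : nat) (D : 'I_k -> 'M[R]_n)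
  (delta : 'I_k -> R) :
  (0 < n)%N ->
  (forall l, doubly_stochastic (D l)) ->
  (forall l, 0 < delta l) ->
  forall (m : nat) (ks ns : seq nat), block_structure n ks ns ->
  ssv ks ns (cmx (Sk delta D) ^+ m) = (\sum_(l < k) delta l) ^+ m.
Proof.
move=> n_gt0 D_ds delta_gt0 m ks ns _.
have delta_ge0 l : 0 <= delta l by exact: ltW.
have sigmaX_ge0 : 0 <= (\sum_l delta l) ^+ m by rewrite exprn_ge0 ?sumr_ge0.
have SkX := semimagicX m (semimagic_Sk delta_ge0 D_ds).
rewrite -cmxX; apply: ssv_eq_of_eigen_bound => //.
- by move=> z; exact: vnorm2_semimagic_le SkX.
- exact: semimagic_mul_ones SkX.
Qed.
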